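(* Let $n\ge1$, $b\ge1$. For $0\le i,j\le n$: (1) the transition probabilities of the type $B$ base-$(2b+1)$ carries chain are $$P(i,j)=\frac1{(2b+1)^n}\sum_{l\ge0}(-1)^l\binom{n+1}{l}\binom{n+(j-l)(2b+1)+b-i}{n};$$ (2) its $r$-step transition probabilities ($r\ge1$) are $$P^r(i,j)=\frac1{(2b+1)^{rn}}\sum_{l\ge0}(-1)^l\binom{n+1}{l}\binom{n+(j-l)(2b+1)^r+\frac{(2b+1)^r-1}{2}-i}{n}.$$
   Context: Binomial convention: $\binom{m}{n}=\frac{m(m-1)\cdots(m-n+1)}{n!}$ if $m\ge n$ and $\binom{m}{n}=0$ if $m<n$ (including negative $m$). The type $B$ base-$(2b+1)$ carries chain (for $n$ summands) is the Markov chain $\kappa_0=0,\kappa_1,\dots$ on $\{0,1,\dots,n\}$ obtained by adding $n$ random base-$(2b+1)$ numbers with i.i.d. digits uniform on $\{0,1,\dots,2b\}$ together with the number all of whose digits equal $b$: $\kappa_{t+1}=\lfloor(\kappa_t+b+X_{t+1,1}+\dots+X_{t+1,n})/(2b+1)\rfloor$ with $X_{t,k}$ i.i.d. uniform on $\{0,\dots,2b\}$. *)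

From HB Require Import structures.
From mathcomp Require Import all_boot all_order all_algebra.
Set Implicit Arguments. Unset Strict Implicit. Unset Printing Implicit Defensive.
Import Order.TTheory GRing.Theory Num.Theory.

(* Generalized binomial with the paper's convention:
   binom m k = m(m-1)...(m-k+1)/k! if m >= k, and 0 if m < k (incl. m < 0). *)
Definition binomZ (m : int) (k : nat) : int :=
  match m with
  | Posz m' => ('C(m', k))%:Z
  | Negz _ => 0
  end.

(* One step of the type B base-(2b+1) carries chain with n summands:
   from carry i, add b and n i.i.d. uniform digits in {0,...,2b}, new carry
   is floor of the sum divided by 2b+1.  The transition probability is the
   number of digit vectors leading to j divided by (2b+1)^n. *)
Definition carriesB_count (n b : nat) (i j : nat) : nat :=
  #|[set x : {ffun 'I_n -> 'I_(2*b).+1} |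
      (i + b + \sum_(k < n) (x k : nat)) %/ (2*b).+1 == j]|.

Definition carriesB_P (n b : nat) : 'M[rat]_(n.+1) :=
  \matrix_(i < n.+1, j < n.+1)
    (((carriesB_count n b i j)%:R / ((2*b).+1 ^ n)%:R)%R).

From mathcomp Require Import all_boot all_order all_algebra.
From mathcomp Require Import ring zify.
Import GRing.Theory Num.Theory.
Local Open Scope ring_scope.

(* Write q = 2b+1.  Starting from carry i, the next carry is j exactly when
   j*q <= i + b + s < (j+1)*q, where s is the digit sum of a vector in
   [0,q)^n.  All quantities are therefore sums, over digit vectors, of a
   function of the digit sum; [digit_sum m n g] computes such a sum
   recursively, one digit at a time, and we develop its calculus: linearity,
   dependence only on the reachable sums, and the base change
   [0,m1*m2) = [0,m1) + m1*[0,m2) for a single digit.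
   (1) Matrix powers.  Two consecutive carries with bases q and M compose
       into one carry with base q*M (floor of floor), so the r-step chain is
       the one-step chain with base q^r and offset (q^r-1)/2.
   (2) Closed form.  The number of digit vectors with digit sum <= t is an
       alternating sum of binomials (induction on n, using the hockey-stick
       identity and a telescoping of Pascal's rule); the count for j is the
       difference of two such distribution functions, which telescopes once
       more into the sum over l < n+2 of the statement.
   Part (1) of the theorem is the case r = 1 of part (2). *)

(* [digit_sum m n g] is the sum of [g (x_1 + ... + x_n)] over all digit
   vectors x in [0,m)^n (see [sum_ffun_digit_sum]). *)
Fixpoint digit_sum (m n : nat) (g : nat -> int) : int :=
  if n is n'.+1 then \sum_(d < m) digit_sum m n' (fun s => g (d + s)%N)
  else g 0%N.

Section DigitSumCalculus.
Variable m : nat.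

Lemma sum_ffun_first_digit (n : nat) (g : nat -> int) :
  \sum_(x : {ffun 'I_n.+1 -> 'I_m}) g (\sum_k (x k : nat))%N =
  \sum_(d < m) \sum_(y : {ffun 'I_n -> 'I_m}) g (d + \sum_k (y k : nat))%N.
Proof.
rewrite pair_big /=.
pose cons_digit (p : 'I_m * {ffun 'I_n -> 'I_m}) : {ffun 'I_n.+1 -> 'I_m} :=
  [ffun k => if unlift ord0 k is Some k' then p.2 k' else p.1].
pose uncons (x : {ffun 'I_n.+1 -> 'I_m}) := (x ord0, [ffun k => x (lift ord0 k)]).
rewrite (reindex cons_digit) /=; last first.
  exists uncons => [[d y] _ | x _]; rewrite /cons_digit /uncons /=.
    by congr pair; [rewrite ffunE unlift_none | apply/ffunP => k; rewrite !ffunE liftK].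
  by apply/ffunP => k; rewrite ffunE; case: unliftP => [k'|] ->; rewrite ?ffunE.
apply: eq_bigr => -[d y] _ /=; congr g.
rewrite big_ord_recl /cons_digit ffunE unlift_none /=; congr addn.
by apply: eq_bigr => k _; rewrite ffunE liftK.
Qed.

Lemma sum_ffun_digit_sum (n : nat) (g : nat -> int) :
  \sum_(x : {ffun 'I_n -> 'I_m}) g (\sum_k (x k : nat))%N = digit_sum m n g.
Proof.
elim: n g => [|n IH] g.
  under eq_bigr do rewrite big_ord0.
  by rewrite sumr_const card_ffun !card_ord expn0.
by rewrite sum_ffun_first_digit; apply: eq_bigr => d _; apply: IH.
Qed.

Lemma card_digit_sum (n : nat) (P : pred nat) :
  (#|[set x : {ffun 'I_n -> 'I_m} | P (\sum_k (x k : nat))%N]|)%:Z =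
  digit_sum m n (fun s => (P s)%:Z).
Proof.
rewrite -sum_ffun_digit_sum -sum1_card -natz natr_sum big_mkcond /=.
by apply: eq_bigr => x _; rewrite inE; case: (P _).
Qed.

Lemma digit_sum_sum (n : nat) (I : Type) (r : seq I) (P : pred I)
    (f : I -> nat -> int) :
  digit_sum m n (fun s => \sum_(i <- r | P i) f i s) =
  \sum_(i <- r | P i) digit_sum m n (f i).
Proof.
elim: n f => [|n IH] f //=.
rewrite exchange_big /=; apply: eq_bigr => d _.
exact: (IH (fun i s => f i (d + s)%N)).
Qed.

Lemma digit_sumZ (n : nat) (a : int) (g : nat -> int) :
  digit_sum m n (fun s => a * g s) = a * digit_sum m n g.
Proof.
elim: n g => [|n IH] g //=.
by rewrite mulr_sumr; apply: eq_bigr => d _; apply: IH.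
Qed.

Lemma digit_sumB (n : nat) (g h : nat -> int) :
  digit_sum m n (fun s => g s - h s) = digit_sum m n g - digit_sum m n h.
Proof.
elim: n g h => [|n IH] g h //=.
by rewrite -sumrB; apply: eq_bigr => d _; apply: IH.
Qed.

Lemma eq_digit_sum (n : nat) (g h : nat -> int) :
  (forall s, (s <= n * m.-1)%N -> g s = h s) -> digit_sum m n g = digit_sum m n h.
Proof.
elim: n g h => [|n IH] g h gh /=; first exact: gh.
apply: eq_bigr => d _; apply: IH => s le_s; apply: gh.
by rewrite mulSn leq_add // -ltnS (ltn_predK (ltn_ord d)).
Qed.

End DigitSumCalculus.

Lemma digit_sum_base1 (n : nat) (g : nat -> int) : digit_sum 1 n g = g 0%N.
Proof. by elim: n g => [|n IH] g //=; rewrite big_ord1 IH. Qed.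

Lemma sum_ord_mixed_radix (m1 m2 : nat) (phi : nat -> int) :
  \sum_(d < m1) \sum_(e < m2) phi (d + m1 * e)%N = \sum_(f < m1 * m2) phi f.
Proof.
elim: m2 => [|m2 IH]; first by rewrite muln0 big_ord0 big1 // => d _; rewrite big_ord0.
under eq_bigr do rewrite big_ord_recr /=.
rewrite big_split /= IH -!(big_mkord xpredT) mulnS addnC.
rewrite (big_cat_nat _ (leq_addr m1 (m1 * m2))) //=; congr (_ + _).
rewrite -{2}[(m1 * m2)%N]add0n big_addn addKn big_mkord.
by apply: eq_bigr => i _; rewrite addnC.
Qed.

(* Base change: digit vectors in [0,m1*m2)^n are pairs of digit vectors in
   [0,m1)^n and [0,m2)^n combined digitwise as x + m1*y. *)
Lemma digit_sum_mul (m1 m2 n : nat) (g : nat -> int) :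
  digit_sum m1 n (fun s => digit_sum m2 n (fun s' => g (s + m1 * s')%N)) =
  digit_sum (m1 * m2) n g.
Proof.
elim: n g => [|n IH] g /=; first by rewrite muln0 addn0.
rewrite -(sum_ord_mixed_radix m1 m2 (fun f => digit_sum (m1 * m2) n (fun s => g (f + s)%N))).
apply: eq_bigr => d _; rewrite digit_sum_sum; apply: eq_bigr => e _.
rewrite -(IH (fun z => g (d + m1 * e + z)%N)).
apply: eq_digit_sum => s _; apply: eq_digit_sum => s' _; congr g; lia.
Qed.

Definition carry_count (n m c i j : nat) : int :=
  digit_sum m n (fun s => ((i + c + s) %/ m == j)%N%:Z).

Lemma carriesB_countE (n b i j : nat) :
  (carriesB_count n b i j)%:Z = carry_count n (2*b).+1 b i j.
Proof. exact: (card_digit_sum _ _ (fun s => (i + b + s) %/ (2*b).+1 == j)%N). Qed.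

(* Floor of a floor: two successive carries form one carry in base m*M. *)
Lemma divn_carry (a d m M : nat) : (0 < m)%N ->
  ((a %/ m + d) %/ M = (a + m * d) %/ (m * M))%N.
Proof. by move=> m_gt0; rewrite divnMA mulnC divnDMl. Qed.

(* The intermediate carry is at most n, since i <= n. *)
Lemma carry_count_compose (n b M c i j : nat) : (i <= n)%N ->
  \sum_(k < n.+1) carry_count n (2*b).+1 b i k * carry_count n M c k j =
  carry_count n ((2*b).+1 * M) (b + (2*b).+1 * c) i j.
Proof.
move=> le_i_n; rewrite /carry_count -digit_sum_mul.
under eq_bigr => k _ do rewrite mulrC -digit_sumZ.
rewrite -digit_sum_sum; apply: eq_digit_sum => s le_s /=.
have mid_lt : ((i + b + s) %/ (2*b).+1 < n.+1)%N.
  rewrite ltn_divLR //; lia.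
rewrite (bigD1 (Ordinal mid_lt)) //= eqxx mulr1 big1 ?addr0 => [|k k_neq]; last first.
  suff /negbTE-> : ((i + b + s) %/ (2*b).+1 != k)%N by rewrite mulr0.
  by apply: contra k_neq => /eqP mid_k; apply/eqP/val_inj.
apply: eq_digit_sum => s' _; rewrite -addnA divn_carry //.
by congr (Posz (nat_of_bool ((_ %/ _)%N == j))); nia.
Qed.

Lemma odd_mulE (b h : nat) :
  ((2*b).+1 * (2*h).+1 = (2 * (b + (2*b).+1 * h)).+1)%N.
Proof. by rewrite mulnS addSn mulnCA mulnDr; ring. Qed.

Lemma half_pred_odd (h : nat) : (((2*h).+1 - 1) %/ 2 = h)%N.
Proof. by rewrite subn1 mulKn. Qed.

Lemma odd_pow (b r : nat) : exists h, ((2*b).+1 ^ r = (2*h).+1)%N.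
Proof.
elim: r => [|r [h q_r]]; first by exists 0%N.
by exists (b + (2*b).+1 * h)%N; rewrite expnS q_r odd_mulE.
Qed.

Lemma carriesB_P_pow (n b r : nat) (i j : 'I_n.+1) :
  (carriesB_P n b ^+ r) i j =
  (carry_count n ((2*b).+1 ^ r) (((2*b).+1 ^ r - 1) %/ 2) i j)%:~R
    / ((((2*b).+1 ^ r) ^ n)%N)%:R.
Proof.
elim: r i j => [|r IH] i j.
  by rewrite expr0 mxE /carry_count digit_sum_base1 expn0 exp1n divn1 !addn0 divr1.
have [h q_r] := odd_pow b r.
rewrite exprS mxE expnS q_r odd_mulE half_pred_odd -odd_mulE.
rewrite -carry_count_compose; last by rewrite -ltnS.
rewrite expnMn natrM invfM rmorph_sum mulr_suml; apply: eq_bigr => k _.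
by rewrite IH q_r half_pred_odd mxE rmorphM /= -(carriesB_countE n b i k) -pmulrn mulrACA.
Qed.

Lemma binomZ_pascal (x : int) (n : nat) :
  binomZ (x + 1) n.+1 = binomZ x n.+1 + binomZ x n.
Proof. by case: x => [a|[|a]] //=; rewrite -PoszD addn1 /= binS PoszD. Qed.

Lemma binomZ_hockey (u : int) (m n : nat) :
  \sum_(d < m) binomZ (u - d%:Z) n = binomZ (u + 1) n.+1 - binomZ (u + 1 - m%:Z) n.+1.
Proof.
elim: m => [|m IH]; first by rewrite big_ord0 subr0 subrr.
rewrite big_ord_recr /= IH.
have -> : u + 1 - m%:Z = (u - m%:Z) + 1 by ring.
rewrite [binomZ (u - m%:Z + 1) _]binomZ_pascal intS.
have -> : u + 1 - (1 + m%:Z) = u - m%:Z by ring.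
by rewrite opprD addrA subrK.
Qed.

Lemma alt_binom_difference (n : nat) (G : nat -> int) :
  \sum_(l < n.+1) (-1) ^+ l * ('C(n, l))%:R * (G l - G l.+1) =
  \sum_(l < n.+2) (-1) ^+ l * ('C(n.+1, l))%:R * G l.
Proof.
rewrite [in RHS]big_ord_recl /=.
under [X in _ = _ + X]eq_bigr => l _ do rewrite binS natrD mulrDr mulrDl.
rewrite big_split /= addrA.
under eq_bigr => l _ do rewrite mulrBr.
rewrite sumrB; congr (_ + _).
  rewrite [in RHS](big_ord_recr n) /= (bin_small (ltnSn n)) mulr0 mul0r addr0.
  by rewrite [in LHS]big_ord_recl /= !bin0.
under [in RHS]eq_bigr => l _ do rewrite exprS mulN1r !mulNr.
by rewrite sumrN.
Qed.

Definition digit_cdf (n m : nat) (t : int) : int :=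
  digit_sum m n (fun s => (nat_of_bool (s%:Z <= t)%R)%:Z).

Lemma digit_cdf_formula (m n : nat) (t : int) :
  digit_cdf n m t =
  \sum_(l < n.+1) (-1) ^+ l * ('C(n, l))%:R * binomZ (t + n%:Z - l%:Z * m%:Z) n.
Proof.
elim: n t => [|n IH] t.
  rewrite /digit_cdf /= big_ord1 expr0 bin0 !mul1r !addr0.
  by case: t => a //=; rewrite bin0.
pose G (l : nat) := binomZ (t + (n.+1)%:Z - l%:Z * m%:Z) n.+1.
have first_digit : digit_cdf n.+1 m t = \sum_(d < m) digit_cdf n m (t - d%:Z).
  apply: eq_bigr => d _; apply: eq_digit_sum => s _.
  by rewrite PoszD lerBrDl.
rewrite first_digit -(alt_binom_difference n G).
under eq_bigr => d _ do rewrite IH.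
rewrite exchange_big; apply: eq_bigr => l _.
rewrite -mulr_sumr /G; congr (_ * _).
have := binomZ_hockey (t + n%:Z - (l : nat)%:Z * m%:Z) m n.
rewrite !intS.
have -> : t + n%:Z - (l : nat)%:Z * m%:Z + 1 = t + (1 + n%:Z) - (l : nat)%:Z * m%:Z by ring.
have -> : t + (1 + n%:Z) - (l : nat)%:Z * m%:Z - m%:Z =
          t + (1 + n%:Z) - (1 + (l : nat)%:Z) * m%:Z by ring.
by move <-; apply: eq_bigr => d _; congr binomZ; ring.
Qed.

Lemma carry_indicator (c i j s : nat) :
  (((i + c + s) %/ (2*c).+1 == j)%N)%:Z =
  (nat_of_bool (s%:Z <= (j * (2*c).+1 + c)%N%:Z - i%:Z)%R)%:Z -
  (nat_of_bool (s%:Z <= (j * (2*c).+1 + c)%N%:Z - (i + (2*c).+1)%N%:Z)%R)%:Z.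
Proof.
rewrite eqn_leq leq_divRL // -ltnS ltn_divLR // !lerBrDr -!PoszD !lez_nat.
set m := (2*c).+1.
case: (leqP (j * m) _) => h1; case: (leqP _ (j.+1 * m)) => h2;
  case: (leqP (s + i) _) => h3; case: (leqP (s + (i + m)) _) => h4 //=; lia.
Qed.

(* Closed form of the one-step carry count in an odd base m = 2c+1 with the
   balanced offset c: a difference of two digit-sum distribution functions. *)
Lemma carry_count_formula (n c i j : nat) :
  carry_count n (2*c).+1 c i j =
  \sum_(l < n.+2) (-1) ^+ l * ('C(n.+1, l))%:R *
     binomZ (n%:Z + (j%:Z - l%:Z) * ((2*c).+1)%:Z + c%:Z - i%:Z) n.
Proof.
set m := (2*c).+1.
pose t := (j * m + c)%N%:Z - i%:Z.
have cdf_diff : carry_count n m c i j = digit_cdf n m t - digit_cdf n m (t - m%:Z).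
  rewrite -digit_sumB; apply: eq_digit_sum => s _.
  by rewrite carry_indicator -/m /t (PoszD i) opprD addrA.
pose G (l : nat) := binomZ (n%:Z + (j%:Z - l%:Z) * m%:Z + c%:Z - i%:Z) n.
rewrite cdf_diff !digit_cdf_formula -sumrB -(alt_binom_difference n G).
apply: eq_bigr => l _; rewrite -mulrBr /G /t intS !PoszD PoszM.
by congr (_ * (_ - _)); congr binomZ; ring.
Qed.

Lemma carriesB_P_pow_formula (n b r : nat) (i j : 'I_n.+1) :
  (carriesB_P n b ^+ r) i j =
  ((2*b).+1 ^ (r * n))%:R^-1 *
    \sum_(l < n.+2)
      ((-1) ^+ l * ('C(n.+1, l))%:R *
       (binomZ ((n%:Z) + ((j%:Z) - (l%:Z)) * (((2*b).+1 ^ r)%N)%:Z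
                + ((((2*b).+1 ^ r - 1) %/ 2)%N)%:Z - (i%:Z)) n)%:~R).
Proof.
have [h q_r] := odd_pow b r.
rewrite carriesB_P_pow expnM !q_r half_pred_odd carry_count_formula mulrC rmorph_sum.
by congr (_ * _); apply: eq_bigr => l _; rewrite !rmorphM /= intr_sign natz.
Qed.

Theorem theorem4p2 (n b : nat) (hn : (1 <= n)%N) (hb : (1 <= b)%N) :
  (forall i j : 'I_n.+1,
     carriesB_P n b i j =
     ((2*b).+1 ^ n)%:R^-1 *
       \sum_(l < n.+2)
         ((-1) ^+ l * ('C(n.+1, l))%:R *
          (binomZ ((n%:Z) + ((j%:Z) - (l%:Z)) * ((2*b).+1)%:Z + (b%:Z) - (i%:Z)) n)%:~R))
  /\
  (forall r : nat, (1 <= r)%N -> forall i j : 'I_n.+1,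
     (carriesB_P n b ^+ r) i j =
     ((2*b).+1 ^ (r * n))%:R^-1 *
       \sum_(l < n.+2)
         ((-1) ^+ l * ('C(n.+1, l))%:R *
          (binomZ ((n%:Z) + ((j%:Z) - (l%:Z)) * (((2*b).+1 ^ r)%N)%:Z
                   + ((((2*b).+1 ^ r - 1) %/ 2)%N)%:Z - (i%:Z)) n)%:~R)).
Proof.
split=> [i j | r _ i j]; last exact: carriesB_P_pow_formula.
have := carriesB_P_pow_formula n b 1 i j.
by rewrite expr1 mul1n expn1 half_pred_odd.
Qed.
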